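(* The set $\mathcal{L}_6$ of real chords of $\mathcal{C}$ (lines joining two distinct points of $\mathcal{C}$) is a single $G$-orbit, and every $\ell\in\mathcal{L}_6$ satisfies $OD_2(\ell)=[0,2,q-1,0,0]$ and $OD_0(\ell)=[2,0,0,q-1,0]$ if $q\equiv 5\pmod 6$, and $OD_0(\ell)=[2,0,\tfrac{q-1}{3},0,\tfrac{2(q-1)}{3}]$ if $q\equiv 1\pmod 6$.
   Context: Let $q$ be a power of a prime $p\neq 2,3$. In $\mathrm{PG}(3,q)$ with coordinates $(Y_0,\dots,Y_3)$, the twisted cubic is $\mathcal{C}=\{P(t)=(1,t,t^2,t^3):t\in\mathbb{F}_q\}\cup\{P(\infty)=(0,0,0,1)\}$. $G\le \mathrm{PGL}(4,q)$ is the image of $\mathrm{PGL}(2,q)$ under the map sending the matrix $\begin{pmatrix}a&b\\c&d\end{pmatrix}$ to $\begin{pmatrix} a^3&a^2b&ab^2&b^3\\ 3a^2c&a^2d+2abc&b^2c+2abd&3b^2d\\ 3ac^2&bc^2+2acd&ad^2+2bcd&3bd^2\\ c^3&c^2d&cd^2&d^3\end{pmatrix}$. Osculating planes: $\Pi(t):-t^3Y_0+3t^2Y_1-3tY_2+Y_3=0$ ($t\in\mathbb{F}_q$), $\Pi(\infty):Y_0=0$. Tangent line at $P\in\mathcal{C}$: the line through $P$ meeting $\mathcal{C}$ with multiplicity two at $P$. Point classes: $\mathcal{P}_1$ = points of $\mathcal{C}$; $\mathcal{P}_2$ = points not on $\mathcal{C}$ on a tangent line; $\mathcal{P}_3$ =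 points not on $\mathcal{C}$ on exactly three osculating planes; $\mathcal{P}_4$ = points not on $\mathcal{C}$ on exactly one osculating plane; $\mathcal{P}_5$ = points on no osculating plane. Plane classes: $\mathcal{H}_1$ = osculating planes; $\mathcal{H}_2$ = planes meeting $\mathcal{C}$ in exactly two points; $\mathcal{H}_3$ = exactly three points; $\mathcal{H}_4$ = non-osculating planes meeting $\mathcal{C}$ in exactly one point; $\mathcal{H}_5$ = planes disjoint from $\mathcal{C}$. $OD_0(\ell)$ (resp. $OD_2(\ell)$) is the list of the numbers of points of $\ell$ in $\mathcal{P}_1,\dots,\mathcal{P}_5$ (resp. planes through $\ell$ in $\mathcal{H}_1,\dots,\mathcal{H}_5$). *)

(* Projective space PG(3,F) over a finite field F is modelled
   with mxalgebra: every projective subspace is represented by its canonical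
   row-space matrix <<A>>%MS : 'M[F]_4 (rank 1 = point, 2 = line, 3 = plane). *)
From HB Require Import structures.
From mathcomp Require Import all_boot all_order all_algebra.
Set Implicit Arguments. Unset Strict Implicit. Unset Printing Implicit Defensive.
Import Order.TTheory GRing.Theory Num.Theory.
Local Open Scope ring_scope.

Section PG3.
Variable F : finFieldType.

Definition rv4 (a b c d : F) : 'rV[F]_4 := \row_(i < 4) [:: a; b; c; d]`_i.
Definition cv4 (a b c d : F) : 'cV[F]_4 := \col_(i < 4) [:: a; b; c; d]`_i.

Definition is_psub (k : nat) (U : 'M[F]_4) : bool :=
  (\rank U == k) && (<<U>>%MS == U).
Definition is_point := is_psub 1.
Definition is_line := is_psub 2.
Definition is_plane := is_psub 3.

Definition pt_of (v : 'rV[F]_4) : 'M[F]_4 := <<v>>%MS.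
Definition join (U V : 'M[F]_4) : 'M[F]_4 := <<(U + V)%MS>>%MS.
Definition plane_of (u : 'cV[F]_4) : 'M[F]_4 := <<kermx u>>%MS.

(* the twisted cubic, parametrised by PG(1,q) = option F (None = infinity) *)
Definition cpt (t : option F) : 'M[F]_4 :=
  match t with
  | Some t => pt_of (rv4 1 t (t ^+ 2) (t ^+ 3))
  | None => pt_of (rv4 0 0 0 1)
  end.
Definition on_curve (P : 'M[F]_4) : bool := [exists t, P == cpt t].

Definition osc (t : option F) : 'M[F]_4 :=
  match t with
  | Some t => plane_of (cv4 (- t ^+ 3) (3%:R * t ^+ 2) (- (3%:R * t)) 1)
  | None => plane_of (cv4 1 0 0 0)
  end.
Definition is_osc (H : 'M[F]_4) : bool := [exists t, H == osc t].

(* tangent lines: span of P(t) and the derivative point P'(t) *)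
Definition tangent (t : option F) : 'M[F]_4 :=
  match t with
  | Some t => join (pt_of (rv4 1 t (t ^+ 2) (t ^+ 3)))
                   (pt_of (rv4 0 1 (2%:R * t) (3%:R * t ^+ 2)))
  | None => join (pt_of (rv4 0 0 0 1)) (pt_of (rv4 0 0 1 0))
  end.

Definition n_osc (P : 'M[F]_4) : nat := #|[set t : option F | (P <= osc t)%MS]|.
Definition n_cpts (H : 'M[F]_4) : nat := #|[set t : option F | (cpt t <= H)%MS]|.

Definition P1 (P : 'M[F]_4) := is_point P && on_curve P.
Definition P2 (P : 'M[F]_4) :=
  [&& is_point P, ~~ on_curve P & [exists t, (P <= tangent t)%MS]].
Definition P3 (P : 'M[F]_4) := [&& is_point P, ~~ on_curve P & n_osc P == 3].
Definition P4 (P : 'M[F]_4) := [&& is_point P, ~~ on_curve P & n_osc P == 1].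
Definition P5 (P : 'M[F]_4) := is_point P && (n_osc P == 0).

Definition H1 (H : 'M[F]_4) := is_plane H && is_osc H.
Definition H2 (H : 'M[F]_4) := is_plane H && (n_cpts H == 2).
Definition H3 (H : 'M[F]_4) := is_plane H && (n_cpts H == 3).
Definition H4 (H : 'M[F]_4) := [&& is_plane H, ~~ is_osc H & n_cpts H == 1].
Definition H5 (H : 'M[F]_4) := is_plane H && (n_cpts H == 0).

Definition pts_in (C : pred 'M[F]_4) (l : 'M[F]_4) : nat :=
  #|[set P | C P & (P <= l)%MS]|.
Definition planes_in (C : pred 'M[F]_4) (l : 'M[F]_4) : nat :=
  #|[set H | C H & (l <= H)%MS]|.
Definition OD0 (l : 'M[F]_4) : seq nat :=
  [:: pts_in P1 l; pts_in P2 l; pts_in P3 l; pts_in P4 l; pts_in P5 l].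
Definition OD2 (l : 'M[F]_4) : seq nat :=
  [:: planes_in H1 l; planes_in H2 l; planes_in H3 l; planes_in H4 l;
      planes_in H5 l].

Definition is_chord (l : 'M[F]_4) : Prop :=
  exists s t : option F, s <> t /\ l = join (cpt s) (cpt t).

(* the group G: image of PGL(2,q); it acts on row vectors on the right *)
Definition Gmx (a b c d : F) : 'M[F]_4 :=
  \matrix_(i < 4, j < 4)
   nth 0 (nth [::] [:: [:: a ^+ 3; a ^+ 2 * b; a * b ^+ 2; b ^+ 3];
       [:: 3%:R * a ^+ 2 * c; a ^+ 2 * d + 2%:R * a * b * c;
           b ^+ 2 * c + 2%:R * a * b * d; 3%:R * b ^+ 2 * d];
       [:: 3%:R * a * c ^+ 2; b * c ^+ 2 + 2%:R * a * c * d;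
           a * d ^+ 2 + 2%:R * b * c * d; 3%:R * b * d ^+ 2];
       [:: c ^+ 3; c ^+ 2 * d; c * d ^+ 2; d ^+ 3]] i) j.
Definition gact (M U : 'M[F]_4) : 'M[F]_4 := <<(U *m M)>>%MS.
Definition in_G_image (l l' : 'M[F]_4) : Prop :=
  exists a b c d : F, a * d - b * c != 0 /\ l' = gact (Gmx a b c d) l.

End PG3.

From HB Require Import structures.
From mathcomp Require Import all_boot all_order all_algebra.
From mathcomp Require Import fingroup pgroup finfield ring zify.
Set Implicit Arguments. Unset Strict Implicit. Unset Printing Implicit Defensive.
Import Order.TTheory GRing.Theory Num.Theory.
Local Open Scope ring_scope.

(* A parameter of C is a point of PG(1,F) with homogeneous coordinates
   x = (x1, x2); the corresponding point of C is Pv x = (x1^3, x1^2 x2, x1 x2^2,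
   x2^3), its osculating plane has normal vector Uv x, and its tangent line is
   spanned by Pv x and the partial derivatives Dv1 x, Dv2 x.  The matrix
   Gmx a b c d is the symmetric cube of [a b; c d]: multiplying by it sends
   Pv x, Dv1 x, Dv2 x, Uv x to the same objects at the image parameter.  So G
   acts on the parameters by Moebius maps, preserves the cubic, its osculating
   planes and tangent lines, hence every point class P1..P5 and plane class
   H1..H5, and OD0, OD2 are constant on G-orbits.

   The proof then has three parts.
   1. PGL(2,F) is transitive on pairs of distinct parameters, so the chords
      form the single G-orbit of l0 = P(0)P(oo) = {Y1 = Y2 = 0}.
   2. On l0: its points other than P(0), P(oo) are (1,0,0,m), m != 0, lying on
      no tangent and on the osculating plane Pi(t) iff t^3 = m; the planes
      through l0 are Y2 = 0 and Y1 + m Y2 = 0, meeting C in 2 points (Y2 = 0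
      and m = 0) or 3 points (m != 0).  No plane through a chord is
      osculating or meets C in fewer than 2 points.
   3. Counting cube roots in F: if q = 5 mod 6 cubing is bijective; if
      q = 1 mod 6 each nonzero element has 0 or 3 cube roots. *)

Ltac ord4 j := case: j => [[|[|[|[|//]]]] ?].

Section ProjectiveLine.
Variable F : fieldType.
Implicit Types (a b c d k : F) (t s : option F) (x : F * F).

Definition hcoord t : F * F := if t is Some t then (1, t) else (0, 1).
Definition param x : option F := if x.1 == 0 then None else Some (x.2 / x.1).
Definition scale2 k x : F * F := (k * x.1, k * x.2).

Definition act2 a b c d x : F * F := (a * x.1 + c * x.2, b * x.1 + d * x.2).
Definition det2 a b c d : F := a * d - b * c.
Definition mob a b c d t : option F := param (act2 a b c d (hcoord t)).

Lemma hcoord_neq0 t : hcoord t != (0, 0).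
Proof. by case: t => [t|]; rewrite /= xpair_eqE ?oner_eq0 ?andbF. Qed.

Lemma hcoordK : cancel hcoord param.
Proof. by case=> [t|]; rewrite /param /= ?eqxx // oner_eq0 divr1. Qed.

Lemma hcoord_param x : x != (0, 0) -> exists2 k, k != 0 & hcoord (param x) = scale2 k x.
Proof.
case: x => x1 x2; rewrite xpair_eqE negb_and /param /scale2 /=.
have [-> /= x2n|x1n _] := eqVneq x1 0.
  by exists x2^-1; rewrite ?invr_eq0 // mulr0 mulVf.
by exists x1^-1; rewrite ?invr_eq0 // mulVf // mulrC.
Qed.

Lemma param_scale k x : k != 0 -> param (scale2 k x) = param x.
Proof.
move=> kn; rewrite /param /scale2 /= mulf_eq0 (negbTE kn) /=.
case: eqP => // /eqP x1n; congr Some; field; exact/andP.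
Qed.

Lemma act2_scale a b c d k x : act2 a b c d (scale2 k x) = scale2 k (act2 a b c d x).
Proof. by rewrite /act2 /scale2 /=; congr pair; ring. Qed.

Lemma scale2_comp k k' x : scale2 k (scale2 k' x) = scale2 (k * k') x.
Proof. by rewrite /scale2 /= !mulrA. Qed.

Lemma det2_adj a b c d : det2 d (- b) (- c) a = det2 a b c d.
Proof. by rewrite /det2; ring. Qed.

Lemma act2_adj a b c d x :
  act2 d (- b) (- c) a (act2 a b c d x) = scale2 (det2 a b c d) x.
Proof. by rewrite /act2 /scale2 /det2 /=; congr pair; ring. Qed.

Lemma act2_neq0 a b c d x : det2 a b c d != 0 -> x != (0, 0) -> act2 a b c d x != (0, 0).
Proof.
move=> dn; apply: contra => /eqP E.
move: (act2_adj a b c d x); rewrite E /act2 /scale2 /= !mulr0 !addr0 => /esym /eqP.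
rewrite xpair_eqE !mulf_eq0 (negbTE dn) /= => /andP[/eqP e1 /eqP e2].
by move: E e1 e2; case: x => x1 x2 /= _ -> ->.
Qed.

Lemma mobK a b c d : det2 a b c d != 0 -> cancel (mob a b c d) (mob d (- b) (- c) a).
Proof.
move=> dn t; rewrite /mob.
have [k kn ->] := hcoord_param (act2_neq0 dn (hcoord_neq0 t)).
by rewrite act2_scale act2_adj scale2_comp param_scale ?hcoordK // mulf_neq0.
Qed.

Lemma mob_inj a b c d : det2 a b c d != 0 -> injective (mob a b c d).
Proof. by move=> dn; apply: can_inj (mobK dn). Qed.

Lemma hcoord_det_eq0 s t :
  (det2 (hcoord s).1 (hcoord s).2 (hcoord t).1 (hcoord t).2 == 0) = (s == t).
Proof.
rewrite /det2; case: s => [s|]; case: t => [t|] /=;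
  rewrite ?mul1r ?mulr1 ?mul0r ?mulr0 ?subr0 ?sub0r ?oppr_eq0 ?oner_eq0 ?subr_eq0 ?eqxx //.
by apply/eqP/eqP => [->|[->]].
Qed.

End ProjectiveLine.

Section Coordinates.
Variable F : finFieldType.
Implicit Types (a b c d k x y z w : F).

Lemma rv4E (v : 'rV[F]_4) : v = rv4 (v 0 0) (v 0 1) (v 0 2) (v 0 3).
Proof. by apply/rowP => j; rewrite mxE; ord4 j => /=; congr (v _ _); exact: val_inj. Qed.

Lemma cv4E (n : 'cV[F]_4) : n = cv4 (n 0 0) (n 1 0) (n 2 0) (n 3 0).
Proof. by apply/colP => j; rewrite mxE; ord4 j => /=; congr (n _ _); exact: val_inj. Qed.

Lemma rv4_eq a b c d a' b' c' d' :
  (rv4 a b c d == rv4 a' b' c' d') = [&& a == a', b == b', c == c' & d == d'].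
Proof.
apply/eqP/idP => [E|/and4P[/eqP-> /eqP-> /eqP-> /eqP->] //].
have e j := congr1 (fun M : 'rV[F]_4 => M 0 j) E.
by move: (e 0) (e 1) (e 2) (e 3); rewrite !mxE /= => -> -> -> ->; rewrite !eqxx.
Qed.

Lemma rv4_eq0 a b c d : (rv4 a b c d == 0) = [&& a == 0, b == 0, c == 0 & d == 0].
Proof.
have -> : (0 : 'rV[F]_4) = rv4 0 0 0 0 by apply/rowP => j; rewrite !mxE; ord4 j.
exact: rv4_eq.
Qed.

Lemma cv4_eq0 a b c d : (cv4 a b c d == 0) = [&& a == 0, b == 0, c == 0 & d == 0].
Proof.
apply/eqP/idP => [E|/and4P[/eqP-> /eqP-> /eqP-> /eqP->]].
  have e j := congr1 (fun M : 'cV[F]_4 => M j 0) E.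
  by move: (e 0) (e 1) (e 2) (e 3); rewrite !mxE /= => -> -> -> ->; rewrite !eqxx.
by apply/colP => j; rewrite !mxE; ord4 j.
Qed.

Lemma rv4Z k a b c d : k *: rv4 a b c d = rv4 (k * a) (k * b) (k * c) (k * d).
Proof. by apply/rowP => j; rewrite !mxE; ord4 j. Qed.

Lemma cv4Z k a b c d : k *: cv4 a b c d = cv4 (k * a) (k * b) (k * c) (k * d).
Proof. by apply/colP => j; rewrite !mxE; ord4 j. Qed.

Lemma rv4D a b c d a' b' c' d' :
  rv4 a b c d + rv4 a' b' c' d' = rv4 (a + a') (b + b') (c + c') (d + d').
Proof. by apply/rowP => j; rewrite !mxE; ord4 j. Qed.

Lemma cv4N a b c d : cv4 (- a) (- b) (- c) (- d) = - cv4 a b c d.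
Proof. by apply/colP => j; rewrite !mxE; ord4 j. Qed.

Lemma rv4_cv4 a b c d x y z w :
  rv4 a b c d *m cv4 x y z w = (a * x + b * y + c * z + d * w)%:M.
Proof.
apply/rowP => j; rewrite !mxE !big_ord_recl big_ord0 !mxE /=.
by rewrite (ord1 j) eqxx mulr1n; ring.
Qed.

Lemma mx11_eq0 k : (k%:M == 0 :> 'M[F]_1) = (k == 0).
Proof.
apply/eqP/eqP => [E|->]; last by apply/matrixP => i j; rewrite !mxE mul0rn.
by move: (congr1 (fun M : 'M[F]_1 => M 0 0) E); rewrite !mxE eqxx mulr1n.
Qed.

End Coordinates.

Section CubicVectors.
Variable F : finFieldType.
Implicit Types (a b c d k : F) (x y w : F * F).

(* the point of C with homogeneous parameter x, the normal vector of its
   osculating plane, and the two partial derivatives of Pv *)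
Definition Pv x : 'rV[F]_4 :=
  rv4 (x.1 ^+ 3) (x.1 ^+ 2 * x.2) (x.1 * x.2 ^+ 2) (x.2 ^+ 3).
Definition Uv x : 'cV[F]_4 :=
  cv4 (- x.2 ^+ 3) (3%:R * x.1 * x.2 ^+ 2) (- (3%:R * x.1 ^+ 2 * x.2)) (x.1 ^+ 3).
Definition Dv1 x : 'rV[F]_4 := rv4 (3%:R * x.1 ^+ 2) (2%:R * x.1 * x.2) (x.2 ^+ 2) 0.
Definition Dv2 x : 'rV[F]_4 := rv4 0 (x.1 ^+ 2) (2%:R * x.1 * x.2) (3%:R * x.2 ^+ 2).

(* Gmx is the symmetric cube of [a b; c d]: it transports Pv, Dv1, Dv2
   along the Moebius action, and its adjugate transports Uv *)
Lemma PvM a b c d x : Pv x *m Gmx a b c d = Pv (act2 a b c d x).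
Proof. by apply/rowP => j; rewrite !mxE !big_ord_recl big_ord0 !mxE /=; ord4 j => /=; ring. Qed.

Lemma Dv1M a b c d x :
  Dv1 x *m Gmx a b c d = a *: Dv1 (act2 a b c d x) + b *: Dv2 (act2 a b c d x).
Proof. by apply/rowP => j; rewrite !mxE !big_ord_recl big_ord0 !mxE /=; ord4 j => /=; ring. Qed.

Lemma Dv2M a b c d x :
  Dv2 x *m Gmx a b c d = c *: Dv1 (act2 a b c d x) + d *: Dv2 (act2 a b c d x).
Proof. by apply/rowP => j; rewrite !mxE !big_ord_recl big_ord0 !mxE /=; ord4 j => /=; ring. Qed.

Lemma GmxU a b c d y : Gmx a b c d *m Uv y = Uv (act2 d (- b) (- c) a y).
Proof. by apply/colP => j; rewrite !mxE !big_ord_recl big_ord0 !mxE /=; ord4 j => /=; ring. Qed.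

Lemma Gmx_adj a b c d :
  Gmx a b c d *m Gmx d (- b) (- c) a = (det2 a b c d ^+ 3)%:M.
Proof.
apply/matrixP => i j; rewrite !mxE !big_ord_recl big_ord0 !mxE /=.
by ord4 i; ord4 j => /=; rewrite /det2; ring.
Qed.

Lemma Pv_scale k x : Pv (scale2 k x) = k ^+ 3 *: Pv x.
Proof. by rewrite rv4Z /Pv /scale2 /=; congr rv4; ring. Qed.
Lemma Uv_scale k x : Uv (scale2 k x) = k ^+ 3 *: Uv x.
Proof. by rewrite cv4Z /Uv /scale2 /=; congr cv4; ring. Qed.
Lemma Dv1_scale k x : Dv1 (scale2 k x) = k ^+ 2 *: Dv1 x.
Proof. by rewrite rv4Z /Dv1 /scale2 /=; congr rv4; ring. Qed.
Lemma Dv2_scale k x : Dv2 (scale2 k x) = k ^+ 2 *: Dv2 x.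
Proof. by rewrite rv4Z /Dv2 /scale2 /=; congr rv4; ring. Qed.

(* the point with parameter w lies on the osculating plane at x only if w = x *)
Lemma Pv_Uv w x : Pv w *m Uv x = (det2 x.1 x.2 w.1 w.2 ^+ 3)%:M.
Proof. by rewrite rv4_cv4 /det2; congr (_ %:M); ring. Qed.

End CubicVectors.

Section Subspaces.
Variable F : finFieldType.
Implicit Types (k : F) (s t u : option F) (x : F * F).
Local Notation M4 := 'M[F]_4.

Lemma sub_ptl (v : 'rV[F]_4) m (X : 'M[F]_(m, 4)) : (pt_of v <= X)%MS = (v <= X)%MS.
Proof. by rewrite /pt_of genmxE. Qed.

Lemma sub_ptr m (X : 'M[F]_(m, 4)) (v : 'rV[F]_4) : (X <= pt_of v)%MS = (X <= v)%MS.
Proof. by rewrite /pt_of genmxE. Qed.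

Lemma sub_joinl (U V : M4) m (X : 'M[F]_(m, 4)) :
  (join U V <= X)%MS = (U <= X)%MS && (V <= X)%MS.
Proof. by rewrite /join genmxE addsmx_sub. Qed.

Lemma sub_joinr m (X : 'M[F]_(m, 4)) (U V : M4) : (X <= join U V)%MS = (X <= U + V)%MS.
Proof. by rewrite /join genmxE. Qed.

Lemma sub_plane m (X : 'M[F]_(m, 4)) (u : 'cV[F]_4) :
  (X <= plane_of u)%MS = (X *m u == 0).
Proof. by rewrite /plane_of genmxE sub_kermx. Qed.

Lemma psub_gen n (U : M4) : is_psub n U -> <<U>>%MS = U.
Proof. by case/andP => _ /eqP. Qed.

Lemma is_point_pt (v : 'rV[F]_4) : v != 0 -> is_point (pt_of v).
Proof. by move=> vn; rewrite /is_point /is_psub /pt_of genmxE rank_rV vn genmx_id !eqxx. Qed.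

Lemma rank_cV (n : 'cV[F]_4) : n != 0 -> \rank n = 1%N.
Proof. by move=> nn; rewrite -mxrank_tr rank_rV -trmx0 (inj_eq trmx_inj) nn. Qed.

Lemma is_plane_of (n : 'cV[F]_4) : n != 0 -> is_plane (plane_of n).
Proof.
move=> nn; rewrite /is_plane /is_psub /plane_of genmxE mxrank_ker genmx_id eqxx andbT.
by rewrite rank_cV.
Qed.

Lemma point_rep (P : M4) : is_point P -> exists2 v : 'rV[F]_4, v != 0 & P = pt_of v.
Proof.
case/andP => /eqP r1 /eqP PP.
have vn : nz_row P != 0.
  by rewrite nz_row_eq0; apply/eqP => P0; move: r1; rewrite P0 mxrank0.
exists (nz_row P) => //.
have e : (nz_row P == P)%MS.
  by rewrite -(mxrank_leqif_eq (nz_row_sub P)).2 rank_rV vn r1.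
by rewrite -{1}PP /pt_of; apply/genmxP/eqmxP; apply: eqmx_sym; exact/eqmxP.
Qed.

Lemma plane_rep (H : M4) : is_plane H -> exists2 n : 'cV[F]_4, n != 0 & H = plane_of n.
Proof.
case/andP => /eqP r3 /eqP HH.
have kr : \rank (kermx H^T) = 1%N by rewrite mxrank_ker mxrank_tr r3.
set w := nz_row (kermx H^T).
have wn : w != 0.
  by apply/negP; rewrite nz_row_eq0 => /eqP K; move: kr; rewrite K mxrank0.
have Hn : H *m w^T = 0.
  have wH : w *m H^T = 0 by apply/eqP; rewrite -sub_kermx nz_row_sub.
  by rewrite -[H]trmxK -trmx_mul wH trmx0.
have nn : w^T != 0 by rewrite -trmx0 (inj_eq trmx_inj).
exists w^T => //.
have Hk : (H <= kermx w^T)%MS by rewrite sub_kermx Hn.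
have eH : (H == kermx w^T)%MS.
  by rewrite -(mxrank_leqif_eq Hk).2 mxrank_ker rank_cV // r3.
by rewrite -HH /plane_of; apply/genmxP.
Qed.

Lemma pt_scale k (v : 'rV[F]_4) : k != 0 -> pt_of (k *: v) = pt_of v.
Proof. by move=> kn; apply/genmxP/eqmxP; apply: eqmx_scale. Qed.

Lemma gen_ext (A B : M4) : (forall X : M4, (X <= A)%MS = (X <= B)%MS) -> <<A>>%MS = <<B>>%MS.
Proof. by move=> E; apply/genmxP/andP; rewrite -E submx_refl E submx_refl. Qed.

Lemma plane_scale k (u : 'cV[F]_4) : k != 0 -> plane_of (k *: u) = plane_of u.
Proof.
move=> kn; apply: gen_ext => X.
by rewrite !sub_kermx -scalemxAr scalemx_eq0 (negbTE kn).
Qed.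

Lemma pt_ofP (v w : 'rV[F]_4) : pt_of v = pt_of w -> exists a, v = a *: w.
Proof.
move=> E; have : (v <= w)%MS by rewrite -sub_ptr -E sub_ptr submx_refl.
by case/sub_rVP => a ->; exists a.
Qed.

Lemma cptE t : cpt t = pt_of (Pv (hcoord t)).
Proof. by case: t => [t|] /=; congr (pt_of _); rewrite /Pv /=; congr rv4; ring. Qed.

Lemma cpt_param x : x != (0, 0) -> cpt (param x) = pt_of (Pv x).
Proof.
move=> xn; have [k kn hk] := hcoord_param xn.
by rewrite cptE hk Pv_scale pt_scale // expf_neq0.
Qed.

Lemma subosc m (X : 'M[F]_(m, 4)) t : (X <= osc t)%MS = (X *m Uv (hcoord t) == 0).
Proof.
case: t => [t|] /=; rewrite sub_plane.
  by congr (_ *m _ == 0); rewrite /Uv /=; congr cv4; ring.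
rewrite -[X *m Uv _ == 0]oppr_eq0 -mulmxN -cv4N /Uv /=.
by congr (_ *m _ == 0); congr cv4; ring.
Qed.

Lemma cpt_osc s u : (cpt s <= osc u)%MS = (u == s).
Proof. by rewrite cptE sub_ptl subosc Pv_Uv mx11_eq0 expf_eq0 /= hcoord_det_eq0. Qed.

End Subspaces.

Section GroupAction.
Variable F : finFieldType.
Implicit Types (a b c d k : F) (t : option F).
Local Notation M4 := 'M[F]_4.

Lemma gact_comp (M N U : M4) : gact N (gact M U) = gact (M *m N) U.
Proof. by apply/genmxP/eqmxP; rewrite mulmxA; apply: eqmxMr (genmxE _). Qed.

Lemma gact_gen (M U : M4) : gact M <<U>>%MS = gact M U.
Proof. by apply/genmxP/eqmxP; apply: eqmxMr (genmxE _). Qed.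

Lemma gact_scalar k (U : M4) : k != 0 -> gact k%:M U = <<U>>%MS.
Proof. by move=> kn; rewrite /gact mul_mx_scalar; apply/genmxP/eqmxP; apply: eqmx_scale. Qed.

Lemma gact_sub (M U V : M4) : M \in unitmx -> (gact M U <= gact M V)%MS = (U <= V)%MS.
Proof. by move=> Mu; rewrite /gact !genmxE submxMfree // row_free_unit. Qed.

Lemma gact_rank (M U : M4) : M \in unitmx -> \rank (gact M U) = \rank U.
Proof. by move=> Mu; rewrite /gact genmxE mxrankMfree // row_free_unit. Qed.

Lemma gact_pt (M : M4) (v : 'rV[F]_4) : gact M (pt_of v) = pt_of (v *m M).
Proof. by apply/genmxP/eqmxP; apply: eqmxMr (genmxE _). Qed.

Lemma gact_join (M U V : M4) : gact M (join U V) = join (gact M U) (gact M V).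
Proof.
apply/genmxP/andP; split.
  rewrite (eqmxMr M (genmxE _)) addsmxMr addsmx_sub; apply/andP; split.
    by apply: submx_trans (addsmxSl _ _); rewrite genmxE.
  by apply: submx_trans (addsmxSr _ _); rewrite genmxE.
rewrite addsmx_sub !genmxE; apply/andP; split; apply: submxMr; rewrite genmxE.
  exact: addsmxSl.
exact: addsmxSr.
Qed.

Section Invertible.
Variables a b c d : F.
Hypothesis dn : det2 a b c d != 0.
Local Notation G := (Gmx a b c d).
(* up to a scalar, the inverse of G is the image of the adjugate matrix *)
Local Notation Gi := (Gmx d (- b) (- c) a).

Lemma det2_adj_neq0 : det2 d (- b) (- c) a != 0.
Proof. by rewrite det2_adj. Qed.

Lemma Gmx_unit : G \in unitmx.
Proof.
have k3 : det2 a b c d ^+ 3 != 0 by rewrite expf_neq0.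
have h : G *m ((det2 a b c d ^+ 3)^-1 *: Gi) = 1%:M.
  by rewrite -scalemxAr Gmx_adj scale_scalar_mx mulVf.
exact: (mulmx1_unit h).1.
Qed.

Lemma gactK (U : M4) : gact Gi (gact G U) = <<U>>%MS.
Proof. by rewrite gact_comp Gmx_adj gact_scalar // expf_neq0. Qed.

Lemma gactKV (U : M4) : gact G (gact Gi U) = <<U>>%MS.
Proof.
have := Gmx_adj d (- b) (- c) a; rewrite !opprK => GiG.
by rewrite gact_comp GiG gact_scalar // expf_neq0 // det2_adj_neq0.
Qed.

Lemma gact_inj (P Q : M4) : (gact G P == gact G Q) = (<<P>>%MS == <<Q>>%MS).
Proof.
apply/eqP/eqP => E; first by rewrite -(gactK P) -(gactK Q) E.
by rewrite -gact_gen E gact_gen.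
Qed.

Lemma gact_cpt t : gact G (cpt t) = cpt (mob a b c d t).
Proof. by rewrite cptE gact_pt PvM /mob cpt_param // act2_neq0 // hcoord_neq0. Qed.

End Invertible.

End GroupAction.

Section Transitivity.
Variable F : finFieldType.
Implicit Types (a b c d : F) (s t : option F).
Local Notation M4 := 'M[F]_4.

Lemma gact_chord a b c d s t : det2 a b c d != 0 ->
  gact (Gmx a b c d) (join (cpt s) (cpt t)) =
  join (cpt (mob a b c d s)) (cpt (mob a b c d t)).
Proof. by move=> dn; rewrite gact_join !gact_cpt. Qed.

(* explicitly, [a b; c d] below sends the pair of parameters (s, t) to
   (s', t'): with x, y, x', y' the homogeneous coordinates of s, t, s', t',
   it maps x to det(x,y) x' and y to det(x,y) y' *)
Lemma chord_move s t s' t' : s != t -> s' != t' ->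
  exists a b c d, det2 a b c d != 0 /\
    join (cpt s') (cpt t') = gact (Gmx a b c d) (join (cpt s) (cpt t)).
Proof.
move=> st st'.
set x := hcoord s; set y := hcoord t; set x' := hcoord s'; set y' := hcoord t'.
have D : det2 x.1 x.2 y.1 y.2 != 0 by rewrite hcoord_det_eq0.
have D' : det2 x'.1 x'.2 y'.1 y'.2 != 0 by rewrite hcoord_det_eq0.
set a := y.2 * x'.1 - x.2 * y'.1; set b := y.2 * x'.2 - x.2 * y'.2.
set c := x.1 * y'.1 - y.1 * x'.1; set d := x.1 * y'.2 - y.1 * x'.2.
have dn : det2 a b c d != 0.
  have -> : det2 a b c d = det2 x.1 x.2 y.1 y.2 * det2 x'.1 x'.2 y'.1 y'.2.
    by rewrite /det2 /a /b /c /d; ring.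
  by rewrite mulf_neq0.
exists a, b, c, d; split => //; rewrite gact_chord // /mob.
have -> : act2 a b c d x = scale2 (det2 x.1 x.2 y.1 y.2) x'.
  by rewrite /act2 /scale2 /det2 /a /b /c /d /=; congr pair; ring.
have -> : act2 a b c d y = scale2 (det2 x.1 x.2 y.1 y.2) y'.
  by rewrite /act2 /scale2 /det2 /a /b /c /d /=; congr pair; ring.
by rewrite !param_scale // !hcoordK.
Qed.

Lemma chords_orbit :
  (exists l : M4, is_chord l) /\
  (forall l : M4, is_chord l -> forall l' : M4, is_chord l' <-> in_G_image l l').
Proof.
split; first by exists (join (cpt (Some 0)) (cpt None)), (Some 0), None.
move=> l [s [t [/eqP st ->]]] l'; split.
  move=> [s' [t' [/eqP st' ->]]].
  by have [a [b [c [d [dn E]]]]] := chord_move st st'; exists a, b, c, d.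
move=> [a [b [c [d [dn ->]]]]].
exists (mob a b c d s), (mob a b c d t); rewrite gact_chord //; split => //.
by apply/eqP; rewrite (inj_eq (mob_inj dn)).
Qed.

End Transitivity.

Section Invariance.
Variable F : finFieldType.
Variables a b c d : F.
Hypothesis dn : det2 a b c d != 0.
Implicit Types (t u : option F).
Local Notation M4 := 'M[F]_4.
Local Notation G := (Gmx a b c d).
Local Notation dn' := (det2_adj_neq0 dn).

Lemma is_psub_gact n (P : M4) : <<P>>%MS = P -> is_psub n (gact G P) = is_psub n P.
Proof.
by move=> PP; rewrite /is_psub gact_rank ?Gmx_unit // /gact genmx_id eqxx PP eqxx.
Qed.

Lemma on_curve_gact (P : M4) : <<P>>%MS = P -> on_curve (gact G P) = on_curve P.
Proof.
move=> PP; apply/existsP/existsP => [[u /eqP E]|[t /eqP E]].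
  exists (mob d (- b) (- c) a u); apply/eqP.
  have := mobK dn' u; rewrite !opprK => mobKV.
  by move: E; rewrite -{1}mobKV -gact_cpt // => /eqP; rewrite gact_inj // PP cptE genmx_id => /eqP.
by exists (mob a b c d t); rewrite E gact_cpt.
Qed.

Lemma n_osc_gact (P : M4) : n_osc (gact G P) = n_osc P.
Proof.
rewrite /n_osc.
have -> : [set t | (gact G P <= osc t)%MS] =
          mob d (- b) (- c) a @^-1: [set t | (P <= osc t)%MS].
  apply/setP => t; rewrite !inE /gact genmxE !subosc -mulmxA GmxU /mob.
  have [k kn ->] := hcoord_param (act2_neq0 dn' (hcoord_neq0 t)).
  by rewrite Uv_scale -scalemxAr scalemx_eq0 expf_eq0 (negbTE kn) andbF.
exact: card_preimset (mob_inj dn').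
Qed.

Lemma n_cpts_gact (H : M4) : n_cpts (gact G H) = n_cpts H.
Proof.
rewrite /n_cpts.
have -> : [set t | (cpt t <= H)%MS] =
          mob a b c d @^-1: [set t | (cpt t <= gact G H)%MS].
  by apply/setP => t; rewrite !inE -gact_cpt // gact_sub // Gmx_unit.
by rewrite (card_preimset _ (mob_inj dn)).
Qed.

End Invariance.

Section Tangents.
Variable F : finFieldType.
Implicit Types (a b c d : F) (t u : option F) (x : F * F).
Local Notation M4 := 'M[F]_4.

Definition tangent_dir t : 'rV[F]_4 := if t is Some t then Dv2 (1, t) else Dv1 (0, 1).

Lemma tangentE t : tangent t = join (pt_of (Pv (hcoord t))) (pt_of (tangent_dir t)).
Proof.
by case: t => [t|] /=; congr join; congr (pt_of _); rewrite /Pv /Dv1 /Dv2 /=; congr rv4; ring.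
Qed.

Lemma tangent_span u :
  [&& (Pv (hcoord u) <= tangent u)%MS, (Dv1 (hcoord u) <= tangent u)%MS
    & (Dv2 (hcoord u) <= tangent u)%MS].
Proof.
rewrite tangentE !sub_joinr.
have hP : (Pv (hcoord u) <= pt_of (Pv (hcoord u)) + pt_of (tangent_dir u))%MS.
  by apply: submx_trans (addsmxSl _ _); rewrite sub_ptr.
have hD : (tangent_dir u <= pt_of (Pv (hcoord u)) + pt_of (tangent_dir u))%MS.
  by apply: submx_trans (addsmxSr _ _); rewrite sub_ptr.
rewrite hP /=; case: u hP hD => [u|] /= hP hD; rewrite hD ?andbT.
  have -> : Dv1 (1, u) = 3%:R *: Pv (1, u) + (- u) *: Dv2 (1, u).
    by rewrite /Dv1 /Dv2 /Pv !rv4Z rv4D /=; congr rv4; ring.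
  by apply: addmx_sub; apply: scalemx_sub.
have -> : Dv2 (0, 1 : F) = 3%:R *: Pv (0, 1) by rewrite /Dv2 /Pv !rv4Z /=; congr rv4; ring.
exact: scalemx_sub.
Qed.

Lemma tangent_span_param x : x != (0, 0) ->
  [&& (Pv x <= tangent (param x))%MS, (Dv1 x <= tangent (param x))%MS
    & (Dv2 x <= tangent (param x))%MS].
Proof.
move=> xn; have [k kn hk] := hcoord_param xn.
have := tangent_span (param x); rewrite hk Pv_scale Dv1_scale Dv2_scale.
have k3 : k ^+ 3 != 0 by rewrite expf_neq0.
have k2 : k ^+ 2 != 0 by rewrite expf_neq0.
case/and3P => h1 h2 h3.
by rewrite -(eqmx_scale _ k3) h1 -(eqmx_scale _ k2) h2 -(eqmx_scale _ k2) h3.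
Qed.

Lemma tangent_gact a b c d t (X : M4) : det2 a b c d != 0 ->
  (X <= tangent t)%MS -> (gact (Gmx a b c d) X <= tangent (mob a b c d t))%MS.
Proof.
move=> dn Xt; rewrite /gact genmxE; apply: submx_trans (submxMr _ Xt) _.
have yn := act2_neq0 dn (hcoord_neq0 t).
case/and3P: (tangent_span_param yn) => h1 h2 h3.
rewrite tangentE (eqmxMr _ (genmxE _)) addsmxMr addsmx_sub.
rewrite !(eqmxMr _ (genmxE _)) PvM /mob h1 /=.
case: t Xt yn h1 h2 h3 => [t|] /= _ _ _ h2 h3; rewrite ?Dv1M ?Dv2M;
  by apply: addmx_sub; apply: scalemx_sub.
Qed.

Lemma on_tangent_gact a b c d (P : M4) : det2 a b c d != 0 ->
  [exists t, (gact (Gmx a b c d) P <= tangent t)%MS] = [exists t, (P <= tangent t)%MS].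
Proof.
move=> dn; apply/existsP/existsP => [[u Pu]|[t Pt]]; last first.
  by exists (mob a b c d t); apply: tangent_gact.
have := tangent_gact (det2_adj_neq0 dn) Pu; rewrite gactK // genmxE => h.
by exists (mob d (- b) (- c) a u).
Qed.

End Tangents.

Section ClassInvariance.
Variable F : finFieldType.
Variables a b c d : F.
Hypothesis dn : det2 a b c d != 0.
Local Notation M4 := 'M[F]_4.
Local Notation G := (Gmx a b c d).
Local Notation Gi := (Gmx d (- b) (- c) a).

Lemma point_classes_gact (P : M4) : <<P>>%MS = P ->
  [/\ P1 (gact G P) = P1 P, P2 (gact G P) = P2 P, P3 (gact G P) = P3 P,
      P4 (gact G P) = P4 P & P5 (gact G P) = P5 P].
Proof.
move=> PP; rewrite /P1 /P2 /P3 /P4 /P5 /is_point.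
by rewrite is_psub_gact // on_curve_gact // n_osc_gact // on_tangent_gact.
Qed.

Lemma plane_classes_gact (H : M4) : <<H>>%MS = H ->
  H2 (gact G H) = H2 H /\ H3 (gact G H) = H3 H.
Proof. by move=> HH; rewrite /H2 /H3 /is_plane is_psub_gact // n_cpts_gact. Qed.

Lemma card_class_gact (C : pred M4) (R : rel M4) (l : M4) :
  (forall P, C P -> <<P>>%MS = P) ->
  (forall P, <<P>>%MS = P -> C (gact G P) = C P) ->
  (forall P, R (gact G P) (gact G l) = R P l) ->
  #|[set P | C P & R P (gact G l)]| = #|[set P | C P & R P l]|.
Proof.
move=> Cgen Cinv Rinv.
have -> : [set P | C P & R P (gact G l)] = gact G @: [set P | C P & R P l].
  apply/setP => P; rewrite inE; apply/andP/imsetP => [[CP RP]|[Q]].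
    have QQ : <<gact Gi P>>%MS = gact Gi P by rewrite /gact genmx_id.
    exists (gact Gi P); last by rewrite gactKV // Cgen.
    by rewrite inE -Cinv // -Rinv gactKV // Cgen // CP.
  by rewrite inE => /andP[CQ RQ] ->; rewrite Cinv ?Cgen // Rinv.
rewrite card_in_imset // => P Q; rewrite !inE => /andP[CP _] /andP[CQ _] E.
by rewrite -(Cgen _ CP) -(Cgen _ CQ) -(gactK dn P) -(gactK dn Q) E.
Qed.

Lemma OD0_gact (l : M4) : OD0 (gact G l) = OD0 l.
Proof.
have pts_gact (C : pred M4) : (forall P, C P -> is_point P) ->
    (forall P, <<P>>%MS = P -> C (gact G P) = C P) -> pts_in C (gact G l) = pts_in C l.
  move=> Cpt Cinv; apply: card_class_gact => // [P /Cpt /psub_gen //|P].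
  by rewrite gact_sub // Gmx_unit.
rewrite /OD0; congr [:: _; _; _; _; _]; apply: pts_gact;
  by [move=> P /andP[] | move=> P /point_classes_gact[]].
Qed.

Lemma planes_in_gact (C : pred M4) (l : M4) : (forall H, C H -> is_plane H) ->
  (forall H, <<H>>%MS = H -> C (gact G H) = C H) ->
  planes_in C (gact G l) = planes_in C l.
Proof.
move=> Cpl Cinv; apply: (card_class_gact (R := fun H l => (l <= H)%MS)) => //.
  by move=> H /Cpl /psub_gen.
by move=> H /=; rewrite gact_sub // Gmx_unit.
Qed.

End ClassInvariance.

Section ReferenceChord.
Variable F : finFieldType.
Implicit Types (m : F) (t u z : option F).
Local Notation M4 := 'M[F]_4.

Definition l0 : M4 := join (cpt (Some 0)) (cpt None).

Lemma l0E : l0 = join (pt_of (rv4 1 0 0 0)) (pt_of (rv4 0 0 0 1)).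
Proof. by rewrite /l0 /=; congr (join (pt_of _) _); congr rv4; ring. Qed.

Lemma sub_l0 (v : 'rV[F]_4) : (v <= l0)%MS = (v 0 1 == 0) && (v 0 2 == 0).
Proof.
have l0_ker (n : 'cV[F]_4) : n 0 0 = 0 -> n 3 0 = 0 -> (l0 <= kermx n)%MS.
  move=> n0 n3; rewrite (cv4E n) n0 n3 l0E sub_joinl !sub_ptl !sub_kermx !rv4_cv4 !mx11_eq0.
  by apply/andP; split; apply/eqP; ring.
apply/idP/idP => [vl|/andP[/eqP v1 /eqP v2]].
  have e1 : (l0 <= kermx (cv4 0 1 0 0))%MS by apply: l0_ker; rewrite mxE.
  have e2 : (l0 <= kermx (cv4 0 0 1 0))%MS by apply: l0_ker; rewrite mxE.
  move: (submx_trans vl e2) (submx_trans vl e1).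
  rewrite !sub_kermx {1 2}(rv4E v) !rv4_cv4 !mx11_eq0.
  by rewrite !mulr0 !mulr1 !addr0 !add0r => -> ->.
rewrite (rv4E v) v1 v2 l0E sub_joinr.
have -> : rv4 (v 0 0) 0 0 (v 0 3) = v 0 0 *: rv4 1 0 0 0 + v 0 3 *: rv4 0 0 0 1.
  by rewrite !rv4Z rv4D; congr rv4; ring.
apply: addmx_sub; apply: scalemx_sub.
  by apply: submx_trans (addsmxSl _ _); rewrite sub_ptr.
by apply: submx_trans (addsmxSr _ _); rewrite sub_ptr.
Qed.

Definition l0_pt z : M4 :=
  if z is Some m then pt_of (rv4 1 0 0 m) else pt_of (rv4 0 0 0 1).

Lemma l0_pt_point z : is_point (l0_pt z) && (l0_pt z <= l0)%MS.
Proof.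
case: z => [m|] /=; rewrite sub_ptl sub_l0 !mxE /= eqxx andbT is_point_pt //.
  by rewrite rv4_eq0 oner_eq0.
by rewrite rv4_eq0 oner_eq0 !andbF.
Qed.

Lemma l0_pt_inj : injective l0_pt.
Proof.
move=> [m|] [m'|] /= /pt_ofP [k]; rewrite rv4Z => /eqP;
  rewrite rv4_eq => /and4P[/eqP h1 _ _ /eqP h4] //.
- by congr Some; move: h1 h4; rewrite mulr1 => <-; rewrite mul1r.
- by move: h1; rewrite mulr0 => /eqP; rewrite oner_eq0.
- by move: h1 h4; rewrite mulr1 => <-; rewrite mul0r => /eqP; rewrite oner_eq0.
Qed.

Lemma l0_pt_onto (P : M4) : is_point P -> (P <= l0)%MS -> exists z, P = l0_pt z.
Proof.
move=> /point_rep[v vn ->]; rewrite sub_ptl sub_l0 => /andP[/eqP v1 /eqP v2].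
move: vn; rewrite (rv4E v) v1 v2 rv4_eq0 !eqxx /=.
have [v0|v0] := eqVneq (v 0 0) 0.
  rewrite v0 ?eqxx /= => vn; exists None.
  by rewrite /= -[in RHS](pt_scale _ vn) rv4Z; congr (pt_of _); congr rv4; ring.
move=> _; exists (Some (v 0 3 / v 0 0)).
rewrite /= -[in RHS](pt_scale _ v0) rv4Z; congr (pt_of _); congr rv4; rewrite ?mulr1 ?mulr0 //.
by rewrite mulrC divfK.
Qed.

Lemma pts_in_l0 (C : pred M4) : (forall P, C P -> is_point P) ->
  pts_in C l0 = #|[set z | C (l0_pt z)]|.
Proof.
move=> Cp; rewrite /pts_in.
have -> : [set P | C P & (P <= l0)%MS] = l0_pt @: [set z | C (l0_pt z)].
  apply/setP => P; rewrite inE; apply/andP/imsetP => [[CP Pl]|[z]].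
    by have [z Pz] := l0_pt_onto (Cp _ CP) Pl; exists z; rewrite // inE -Pz.
  by rewrite inE => Cz ->; case/andP: (l0_pt_point z).
by rewrite card_imset //; apply: l0_pt_inj.
Qed.

End ReferenceChord.

Lemma card_Some (T : finType) (Q : pred (option T)) : ~~ Q None ->
  #|[set z | Q z]| = #|[set t : T | Q (Some t)]|.
Proof.
move=> QN; have -> : [set z | Q z] = Some @: [set t : T | Q (Some t)].
  apply/setP => [[t|]]; rewrite inE; last by rewrite (negbTE QN); apply/esym/imsetP => -[].
  by rewrite mem_imset ?inE //; apply: Some_inj.
by rewrite card_imset //; apply: Some_inj.
Qed.

Section PointsOfReferenceChord.
Variable F : finFieldType.
Implicit Types (m : F) (t u z : option F).
Local Notation M4 := 'M[F]_4.

Definition ncube m : nat := #|[set t : F | t ^+ 3 == m]|.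
Definition ncube_count (n : nat) : nat := #|[set m : F | (m != 0) && (ncube m == n)]|.

Lemma l0_pt_osc m t : (l0_pt (Some m) <= osc t)%MS = if t is Some t then t ^+ 3 == m else false.
Proof.
rewrite /l0_pt sub_ptl subosc /Uv; case: t => [t|] /=; rewrite rv4_cv4 mx11_eq0.
  have -> : 1 * - t ^+ 3 + 0 * (3%:R * 1 * t ^+ 2) + 0 * - (3%:R * 1 ^+ 2 * t) + m * 1 ^+ 3
    = m - t ^+ 3 by ring.
  by rewrite subr_eq0 eq_sym.
by rewrite [X in X == 0](_ : _ = -1) ?oppr_eq0 ?oner_eq0 //; ring.
Qed.

Lemma n_osc_l0_pt m : n_osc (l0_pt (Some m)) = ncube m.
Proof.
rewrite /n_osc (card_Some (Q := fun t => (l0_pt (Some m) <= osc t)%MS)) ?l0_pt_osc //.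
by apply: eq_card => t; rewrite !inE l0_pt_osc.
Qed.

(* a point of C lies on its own osculating plane *)
Lemma n_osc_cpt u : (n_osc (cpt u) == 0%N) = false.
Proof.
by apply/negbTE; rewrite /n_osc cards_eq0; apply/set0Pn; exists u; rewrite inE cpt_osc.
Qed.

Lemma l0_pt_cpt : (l0_pt (Some 0) = cpt (Some (0 : F))) * (l0_pt None = cpt (None : option F)).
Proof. by split => //=; congr (pt_of _); congr rv4; ring. Qed.

Lemma on_curve_l0_pt z : on_curve (l0_pt z) = (z == None) || (z == Some 0).
Proof.
case: z => [m|]; last by apply/existsP; exists None.
have [->|mn] := eqVneq m 0; first by rewrite eqxx orbT; apply/existsP; exists (Some 0); rewrite l0_pt_cpt.
have -> : (Some m == None) || (Some m == Some 0) = false.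
  by rewrite (inj_eq (@Some_inj _)) (negbTE mn).
apply/negbTE/existsP => -[t /eqP]; rewrite cptE => /pt_ofP [k]; rewrite /Pv rv4Z => /eqP.
rewrite rv4_eq => /and4P[/eqP h1 /eqP h2 _ /eqP h4].
case: t h1 h2 h4 => [t|] /=; last by rewrite expr0n mulr0 => /eqP; rewrite oner_eq0.
rewrite expr1n mulr1 => <-; rewrite expr1n !mul1r => <-.
by rewrite expr0n => /eqP; rewrite (negbTE mn).
Qed.

Lemma join_pt_ker (v A B : 'rV[F]_4) (n : 'cV[F]_4) :
  (v <= join (pt_of A) (pt_of B))%MS -> A *m n == 0 -> B *m n == 0 -> v *m n == 0.
Proof.
move=> vs hA hB; rewrite -sub_kermx; apply: submx_trans vs _.
by rewrite sub_joinl !sub_ptl !sub_kermx hA hB.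
Qed.

Lemma l0_pt_tangent m : m != 0 -> [exists t, (l0_pt (Some m) <= tangent t)%MS] = false.
Proof.
move=> mn; apply/negbTE/existsP => -[t]; rewrite /l0_pt sub_ptl.
case: t => [t|] /= Ht.
  have [t0|tn] := eqVneq t 0.
    have := join_pt_ker (n := cv4 0 0 0 1) Ht; rewrite !rv4_cv4 !mx11_eq0 t0.
    by rewrite !(mulr0, mul0r, add0r, addr0, mulr1, expr0n) /= eqxx (negbTE mn) => /(_ isT isT).
  have := join_pt_ker (n := cv4 (t ^+ 2) (- (2%:R * t)) 1 0) Ht; rewrite !rv4_cv4 !mx11_eq0.
  have -> : 1 * t ^+ 2 + t * - (2%:R * t) + t ^+ 2 * 1 + t ^+ 3 * 0 = 0 by ring.
  have -> : 0 * t ^+ 2 + 1 * - (2%:R * t) + 2%:R * t * 1 + 3%:R * t ^+ 2 * 0 = 0 by ring.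
  have -> : 1 * t ^+ 2 + 0 * - (2%:R * t) + 0 * 1 + m * 0 = t ^+ 2 by ring.
  by rewrite eqxx expf_eq0 /= (negbTE tn) => /(_ isT isT).
have := join_pt_ker (n := cv4 1 0 0 0) Ht; rewrite !rv4_cv4 !mx11_eq0.
by rewrite !(mulr0, mul0r, add0r, addr0, mulr1) eqxx oner_eq0 => /(_ isT isT).
Qed.

Lemma l0_pt_is_point z : is_point (l0_pt z).
Proof. by case/andP: (l0_pt_point z). Qed.

Lemma pts_in_l0_ncube (C : pred M4) n : (forall P, C P -> is_point P) ->
  ~~ C (l0_pt None) -> (forall m, C (l0_pt (Some m)) = (m != 0) && (ncube m == n)) ->
  pts_in C (l0 F) = ncube_count n.
Proof.
move=> Cp CN CS; rewrite pts_in_l0 // (card_Some (Q := fun z => C (l0_pt z))) //.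
by apply: eq_card => m; rewrite !inE CS.
Qed.

Lemma P1_l0 : pts_in (@P1 F) (l0 F) = 2%N.
Proof.
rewrite pts_in_l0 => [|P /andP[] //].
rewrite (eq_card (B := [set None; Some 0])) ?cards2 // => z.
by rewrite !inE /P1 l0_pt_is_point on_curve_l0_pt.
Qed.

Lemma P2_l0 : pts_in (@P2 F) (l0 F) = 0%N.
Proof.
have P2_pt z : P2 (l0_pt z) = false.
  rewrite /P2 on_curve_l0_pt; case: z => [m|]; last by rewrite eqxx andbF.
  rewrite (inj_eq (@Some_inj _)).
  by have [->|mn] := eqVneq m 0; rewrite ?eqxx ?andbF // l0_pt_tangent // !andbF.
by rewrite pts_in_l0 => [|P /andP[] //]; apply: eq_card0 => z; rewrite !inE P2_pt.
Qed.

Lemma P3_l0 : pts_in (@P3 F) (l0 F) = ncube_count 3.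
Proof.
apply: pts_in_l0_ncube => [P /andP[] //||m]; first by rewrite /P3 on_curve_l0_pt andbF.
by rewrite /P3 l0_pt_is_point on_curve_l0_pt (inj_eq (@Some_inj _)) n_osc_l0_pt.
Qed.

Lemma P4_l0 : pts_in (@P4 F) (l0 F) = ncube_count 1.
Proof.
apply: pts_in_l0_ncube => [P /andP[] //||m]; first by rewrite /P4 on_curve_l0_pt andbF.
by rewrite /P4 l0_pt_is_point on_curve_l0_pt (inj_eq (@Some_inj _)) n_osc_l0_pt.
Qed.

Lemma P5_l0 : pts_in (@P5 F) (l0 F) = ncube_count 0.
Proof.
apply: pts_in_l0_ncube => [P /andP[] //||m]; first by rewrite /P5 l0_pt_cpt n_osc_cpt andbF.
rewrite /P5 l0_pt_is_point; have [->|mn] := eqVneq m 0.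
  by rewrite (l0_pt_cpt).1 n_osc_cpt.
by rewrite n_osc_l0_pt.
Qed.

Lemma OD0_l0 : OD0 (l0 F) = [:: 2; 0; ncube_count 3; ncube_count 1; ncube_count 0]%N.
Proof. by rewrite /OD0 P1_l0 P2_l0 P3_l0 P4_l0 P5_l0. Qed.

End PointsOfReferenceChord.

Section PlanesThroughChords.
Variable F : finFieldType.
Implicit Types (m : F) (s t u z : option F).
Local Notation M4 := 'M[F]_4.

Definition l0_normal z : 'cV[F]_4 := if z is Some m then cv4 0 1 m 0 else cv4 0 0 1 0.
Definition l0_plane z : M4 := plane_of (l0_normal z).

Lemma l0_plane_through z : is_plane (l0_plane z) && (l0 F <= l0_plane z)%MS.
Proof.
have nz : l0_normal z != 0 by case: z => [m|]; rewrite cv4_eq0 oner_eq0 ?andbF.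
rewrite is_plane_of //= l0E sub_joinl !sub_ptl !sub_plane.
by case: z {nz} => [m|]; rewrite !rv4_cv4 !mx11_eq0; apply/andP; split; apply/eqP; ring.
Qed.

Lemma l0_plane_inj : injective l0_plane.
Proof.
move=> z1 z2 E; have E' (v : 'rV[F]_4) : (v *m l0_normal z1 == 0) = (v *m l0_normal z2 == 0).
  by rewrite -!sub_plane -/(l0_plane _) E.
case: z1 z2 E E' => [m|] [m'|] _ E' //.
- move: (E' (rv4 0 m (-1) 0)); rewrite !rv4_cv4 !mx11_eq0.
  have -> : 0 * 0 + m * 1 + -1 * m + 0 * 0 = 0 by ring.
  have -> : 0 * 0 + m * 1 + -1 * m' + 0 * 0 = m - m' by ring.
  by rewrite eqxx subr_eq0 => /esym /eqP ->.
- by move: (E' (rv4 0 1 0 0)); rewrite !rv4_cv4 !mx11_eq0 !(mul0r, mulr0, mul1r, addr0, add0r)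
    eqxx oner_eq0.
- by move: (E' (rv4 0 1 0 0)); rewrite !rv4_cv4 !mx11_eq0 !(mul0r, mulr0, mul1r, addr0, add0r)
    eqxx oner_eq0.
Qed.

Lemma l0_plane_onto (H : M4) : is_plane H -> (l0 F <= H)%MS -> exists z, H = l0_plane z.
Proof.
move=> /plane_rep[n nn ->] Hl.
have n0 : n 0 0 = 0.
  move: Hl; rewrite l0E sub_joinl !sub_ptl !sub_plane => /andP[h1 _].
  by move: h1; rewrite {1}(cv4E n) rv4_cv4 mx11_eq0 => /eqP <-; ring.
have n3 : n 3 0 = 0.
  move: Hl; rewrite l0E sub_joinl !sub_ptl !sub_plane => /andP[_ h3].
  by move: h3; rewrite {1}(cv4E n) rv4_cv4 mx11_eq0 => /eqP <-; ring.
move: nn; rewrite (cv4E n) n0 n3 cv4_eq0 eqxx /=.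
have [n1|n1] := eqVneq (n 1 0) 0.
  rewrite n1 ?eqxx /= ?andbT => n2; exists None.
  by rewrite /l0_plane -[in RHS](plane_scale _ n2) cv4Z; congr (plane_of _); congr cv4; ring.
move=> _; exists (Some (n 2 0 / n 1 0)).
rewrite /l0_plane -[in RHS](plane_scale _ n1) cv4Z; congr (plane_of _); congr cv4;
  rewrite ?mulr1 ?mulr0 //.
by rewrite mulrC divfK.
Qed.

Lemma planes_in_l0 (C : pred M4) : (forall H, C H -> is_plane H) ->
  planes_in C (l0 F) = #|[set z | C (l0_plane z)]|.
Proof.
move=> Cp; rewrite /planes_in.
have -> : [set H | C H & (l0 F <= H)%MS] = l0_plane @: [set z | C (l0_plane z)].
  apply/setP => H; rewrite inE; apply/andP/imsetP => [[CH Hl]|[z]].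
    by have [z Hz] := l0_plane_onto (Cp _ CH) Hl; exists z; rewrite // inE -Hz.
  by rewrite inE => Cz ->; case/andP: (l0_plane_through z).
by rewrite card_imset //; apply: l0_plane_inj.
Qed.

Lemma cpt_in_l0_plane t z : (cpt t <= l0_plane z)%MS =
  if t is Some t then (if z is Some m then t * (1 + m * t) == 0 else t ^+ 2 == 0) else true.
Proof.
rewrite cptE sub_ptl sub_plane /Pv; case: t => [t|]; case: z => [m|];
  rewrite /= rv4_cv4 mx11_eq0; first [by apply/eqP; ring | by congr (_ == _); ring].
Qed.

(* the plane Y1 + m Y2 = 0 meets C in P(oo), P(0) and, if m != 0, P(-1/m);
   the plane Y2 = 0 only in P(oo) and P(0) *)
Lemma n_cpts_l0_plane z :
  n_cpts (l0_plane z) = if z is Some m then (if m == 0 then 2%N else 3%N) else 2%N.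
Proof.
rewrite /n_cpts; case: z => [m|]; last first.
  rewrite (eq_card (B := [set None; Some 0])) ?cards2 // => -[t|];
    by rewrite !inE cpt_in_l0_plane // expf_eq0 /= (inj_eq (@Some_inj _)).
have [->|mn] := eqVneq m 0.
  rewrite (eq_card (B := [set None; Some 0])) ?cards2 // => -[t|];
    by rewrite !inE cpt_in_l0_plane // mul0r addr0 mulr1 (inj_eq (@Some_inj _)).
rewrite (eq_card (B := [set x in [:: None; Some 0; Some (- m^-1)]])).
  rewrite cardsE; apply/card_uniqP; rewrite /= !inE !(inj_eq (@Some_inj _)) /=.
  by rewrite eq_sym oppr_eq0 invr_eq0 mn.
move=> [t|]; rewrite !inE cpt_in_l0_plane // mulf_eq0 !(inj_eq (@Some_inj _)).
congr (_ || _); apply/eqP/eqP => [h|->]; last by field.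
by apply: (mulfI mn); rewrite mulrN mulfV // -(subr0 (m * t)) -h; ring.
Qed.

Lemma H2_l0 : planes_in (@H2 F) (l0 F) = 2%N.
Proof.
rewrite planes_in_l0 => [|H /andP[] //].
rewrite (eq_card (B := [set None; Some 0])) ?cards2 // => z.
rewrite !inE /H2 n_cpts_l0_plane; case/andP: (l0_plane_through z) => -> _.
by case: z => [m|] //=; rewrite (inj_eq (@Some_inj _)); case: (m == 0).
Qed.

Lemma H3_l0 : planes_in (@H3 F) (l0 F) = #|F|.-1.
Proof.
rewrite planes_in_l0 => [|H /andP[] //].
rewrite (card_Some (Q := fun z => H3 (l0_plane z))); last by rewrite /H3 n_cpts_l0_plane andbF.
rewrite -(cardsC1 (0 : F)); apply: eq_card => m; rewrite !inE /H3 n_cpts_l0_plane.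
by case/andP: (l0_plane_through (Some m)) => -> _; case: (m == 0).
Qed.

Lemma chord_H1 s t : s != t -> planes_in (@H1 F) (join (cpt s) (cpt t)) = 0%N.
Proof.
move=> st; apply: eq_card0 => H; rewrite !inE; apply/negP.
case/andP => /andP[_ /existsP[u /eqP ->]]; rewrite sub_joinl !cpt_osc.
by case/andP => /eqP us /eqP ut; move: st; rewrite -us -ut eqxx.
Qed.

Lemma chord_n_cpts s t (H : M4) : s != t -> (join (cpt s) (cpt t) <= H)%MS -> (2 <= n_cpts H)%N.
Proof.
move=> st; rewrite sub_joinl => /andP[hs ht].
have -> : 2%N = #|[set s; t]| by rewrite cards2 st.
rewrite /n_cpts; apply: subset_leq_card; apply/subsetP => x.
by rewrite !inE => /orP[] /eqP ->.
Qed.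

Lemma chord_H4 s t : s != t -> planes_in (@H4 F) (join (cpt s) (cpt t)) = 0%N.
Proof.
move=> st; apply: eq_card0 => H; rewrite !inE; apply/negP.
by case/andP => /and3P[_ _ /eqP n1] /(chord_n_cpts st); rewrite n1.
Qed.

Lemma chord_H5 s t : s != t -> planes_in (@H5 F) (join (cpt s) (cpt t)) = 0%N.
Proof.
move=> st; apply: eq_card0 => H; rewrite !inE; apply/negP.
by case/andP => /andP[_ /eqP n0] /(chord_n_cpts st); rewrite n0.
Qed.

End PlanesThroughChords.

Section CubeRoots.
Variable K : fieldType.
Variable w : K.
Hypotheses (w3 : w ^+ 3 = 1) (w1 : w != 1).

Lemma cube_unity_sum : 1 + w + w ^+ 2 = 0.
Proof.
have e : (w - 1) * (1 + w + w ^+ 2) = w ^+ 3 - 1 by ring.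
by move: e; rewrite w3 subrr => /eqP; rewrite mulf_eq0 subr_eq0 (negbTE w1) => /eqP.
Qed.

Lemma cube_roots (t0 t : K) :
  (t ^+ 3 == t0 ^+ 3) = [|| t == t0, t == w * t0 | t == w ^+ 2 * t0].
Proof.
have key : (t - t0) * (t - w * t0) * (t - w ^+ 2 * t0) =
    t ^+ 3 - t0 ^+ 3 - (1 + w + w ^+ 2) * t0 * t ^+ 2
    + w * (1 + w + w ^+ 2) * t0 ^+ 2 * t - (w ^+ 3 - 1) * t0 ^+ 3 by ring.
rewrite cube_unity_sum w3 subrr !mul0r mulr0 !mul0r subr0 addr0 subr0 in key.
by rewrite -subr_eq0 -key !mulf_eq0 !subr_eq0 -orbA.
Qed.

Lemma cube_roots_uniq (t0 : K) : t0 != 0 -> uniq [:: t0; w * t0; w ^+ 2 * t0].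
Proof.
move=> t0n; have w0 : w != 0.
  by apply/eqP => w0; move: w3; rewrite w0 expr0n => /eqP; rewrite eq_sym oner_eq0.
have w21 : w ^+ 2 != 1.
  by apply: contraNneq w1 => w2; rewrite -w3 exprS w2 mulr1 eqxx.
have e1 : (t0 == w * t0) = (1 == w) by rewrite -[RHS](inj_eq (mulIf t0n)) mul1r.
have e2 : (t0 == w ^+ 2 * t0) = (1 == w ^+ 2) by rewrite -[RHS](inj_eq (mulIf t0n)) mul1r.
have e3 : (w * t0 == w ^+ 2 * t0) = (1 == w).
  by rewrite (inj_eq (mulIf t0n)) exprS expr1 -{1}[w]mulr1 (inj_eq (mulfI w0)).
by rewrite /= !inE andbT e1 e2 e3 !(eq_sym 1) negb_or w1 w21.
Qed.

End CubeRoots.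

Section CubesInFiniteFields.
Variable F : finFieldType.
Local Notation q := #|F|.

(* if q = 5 mod 6 then 3 is invertible mod q - 1, so cubing is a bijection *)
Lemma cube_inj : (q %% 6 = 5)%N -> injective (fun t : F => t ^+ 3).
Proof.
move=> h; pose k := (4 * (q %/ 6) + 3)%N.
have cubeK (t : F) : (t ^+ 3) ^+ k = t.
  have e : (3 * k).+1 = (q * 2)%N by have := divn_eq q 6; rewrite h /k; lia.
  have [->|tn] := eqVneq t 0; first by rewrite -exprM expr0n; case: eqP => //; lia.
  by apply: (mulIf tn); rewrite -exprM -exprSr e exprM expf_card.
by move=> x y /= E; rewrite -(cubeK x) -(cubeK y) E.
Qed.

Lemma ncube_q5 : (q %% 6 = 5)%N -> forall m : F, ncube m = 1%N.
Proof.
move=> h m; rewrite /ncube -[RHS](cards1 m) -(card_preimset [set m] (cube_inj h)).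
by apply: eq_card => t; rewrite !inE.
Qed.

(* if q = 1 mod 6 then 3 divides the order of the cyclic group F^*, which
   therefore contains a primitive cube root of unity *)
Lemma cube_root_unity : (q %% 6 = 1)%N -> exists2 w : F, w ^+ 3 = 1 & w != 1.
Proof.
move=> h; have d3 : (3 %| #|[set: {unit F}]|)%N.
  rewrite card_finField_unit; apply/dvdnP; exists (2 * (q %/ 6))%N.
  by have := divn_eq q 6; rewrite h; lia.
have [x _ ox] := Cauchy (isT : prime 3) d3.
exists (val x); first by rewrite -FinRing.val_unitX -ox expg_order.
apply/eqP => x1; have x1' : x = 1%g by apply: val_inj; rewrite x1.
by move: ox; rewrite x1' order1.
Qed.

Lemma ncube_q1 : (q %% 6 = 1)%N -> forall m : F, m != 0 -> (ncube m == 0%N) || (ncube m == 3%N).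
Proof.
move=> h m mn; have [w w3 w1] := cube_root_unity h.
case: (pickP (fun t : F => t ^+ 3 == m)) => [t0 /eqP m3|no]; last first.
  by rewrite /ncube (eq_card0 (A := [set t | t ^+ 3 == m])) // => t; rewrite inE no.
have t0n : t0 != 0 by apply: contraNneq mn => t0z; rewrite -m3 t0z expr0n.
rewrite /ncube (eq_card (B := [set x in [:: t0; w * t0; w ^+ 2 * t0]])).
  by rewrite cardsE (card_uniqP (cube_roots_uniq w3 w1 t0n)) orbT.
by move=> t; rewrite !inE -m3 (cube_roots w3 w1) orbA.
Qed.

(* cubing partitions F^* into fibres, each of size 0 or 3 *)
Lemma ncube_count_q1 : (q %% 6 = 1)%N -> (ncube_count F 3 * 3)%N = q.-1.
Proof.
move=> h; rewrite -(cardsC1 (0 : F)) -[RHS]sum1_card.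
rewrite (partition_big (fun t : F => t ^+ 3) (fun m => m != 0)) /=; last first.
  by move=> t; rewrite !inE => tn; rewrite expf_neq0.
rewrite -sum_nat_const [RHS](bigID (fun m => ncube m == 3%N)) /=.
have fibre (m : F) : m != 0 -> (\sum_(t in [set~ (0%R : F)] | t ^+ 3 == m) 1)%N = ncube m.
  move=> mn; rewrite /ncube -sum1_card; apply: eq_bigl => t; rewrite !inE.
  have [e|] := eqVneq (t ^+ 3) m; rewrite ?andbF ?andbT //.
  by apply: contraNneq mn => t0; rewrite -e t0 expr0n.
rewrite [X in (_ + X)%N]big1 ?addn0 => [|m /andP[mn c3]]; last first.
  by rewrite fibre //; move: (ncube_q1 h mn); rewrite (negbTE c3) orbF => /eqP.
by apply: eq_big => m; rewrite inE // => /andP[mn /eqP c3]; rewrite fibre // c3.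
Qed.

End CubesInFiniteFields.

Section OrbitDistributions.
Variable F : finFieldType.
Local Notation q := #|F|.

Lemma OD0_l0_q5 : (q %% 6 = 5)%N -> OD0 (l0 F) = [:: 2; 0; 0; q - 1; 0]%N.
Proof.
move=> h; rewrite OD0_l0 /ncube_count subn1; congr [:: _; _; _; _; _].
- by apply: eq_card0 => m; rewrite !inE ncube_q5 // andbF.
- by rewrite -(cardsC1 (0 : F)); apply: eq_card => m; rewrite !inE ncube_q5 // andbT.
- by apply: eq_card0 => m; rewrite !inE ncube_q5 // andbF.
Qed.

Lemma OD0_l0_q1 : (q %% 6 = 1)%N ->
  OD0 (l0 F) = [:: 2; 0; (q - 1) %/ 3; 0; (2 * (q - 1)) %/ 3]%N.
Proof.
move=> h; have N3 := ncube_count_q1 h.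
have no1 : ncube_count F 1 = 0%N.
  apply: eq_card0 => m; rewrite !inE; have [->|mn] := eqVneq m 0; first by rewrite ?eqxx.
  by case/orP: (ncube_q1 h mn) => /eqP ->.
have N0 : ncube_count F 0 = (q.-1 - ncube_count F 3)%N.
  rewrite -(cardsC1 (0 : F)) -(cardsID [set m : F | ncube m == 3%N] [set~ 0]).
  have -> : [set~ (0 : F)] :&: [set m | ncube m == 3%N] =
            [set m : F | (m != 0) && (ncube m == 3%N)] by apply/setP => m; rewrite !inE.
  rewrite addKn; apply: eq_card => m; rewrite !inE.
  have [->|mn] := eqVneq m 0; first by rewrite andbF.
  by case/orP: (ncube_q1 h mn) => /eqP ->.
rewrite OD0_l0 no1 N0 subn1 -N3 mulnK //; congr [:: _; _; _; _; _].
by rewrite mulnA mulnK //; lia.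
Qed.

Lemma OD2_chord (s t : option F) : s != t ->
  OD2 (join (cpt s) (cpt t)) = [:: 0; 2; q - 1; 0; 0]%N.
Proof.
move=> st; rewrite subn1 /OD2 chord_H1 // chord_H4 // chord_H5 //.
have [a [b [c [d [dn ->]]]]] := chord_move (s := Some 0) (t := None) isT st.
rewrite -/(l0 F) !planes_in_gact ?H2_l0 ?H3_l0 //;
  by [move=> H /andP[] | move=> H /(plane_classes_gact dn)[]].
Qed.

End OrbitDistributions.

Theorem mainTheorem10 (F : finFieldType) (q : nat) (hq : #|F| = q)
  (h2 : (2 \notin [pchar F])%N) (h3 : (3 \notin [pchar F])%N) :
  (* L6 is a single G-orbit *)
  ((exists l : 'M[F]_4, is_chord l) /\
   (forall l : 'M[F]_4, is_chord l ->
      forall l' : 'M[F]_4, is_chord l' <-> in_G_image l l')) /\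
  (forall l : 'M[F]_4, is_chord l ->
     OD2 l = [:: 0; 2; q - 1; 0; 0]%N /\
     ((q %% 6 = 5)%N -> OD0 l = [:: 2; 0; 0; q - 1; 0]%N) /\
     ((q %% 6 = 1)%N -> OD0 l = [:: 2; 0; (q - 1) %/ 3; 0; (2 * (q - 1)) %/ 3]%N)).
Proof.
split; first exact: chords_orbit.
move=> l [s [t [/eqP st ->]]]; rewrite -hq; split; first exact: OD2_chord.
(* every chord is the image of l0 under G, and OD0 is G-invariant *)
have [a [b [c [d [dn ->]]]]] := chord_move (s := Some 0) (t := None) isT st.
rewrite -/(l0 F) OD0_gact //.
by split; [exact: OD0_l0_q5 | exact: OD0_l0_q1].
Qed.
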